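(* Let $T$ be a string, let $1\le j\le |T|$, $1\le i\le j+1$, let $w$ be a string, and let $L=T[1..i-1]$, $R=T[j+1..|T|]$ and $T'=LwR$. Assume $|L|\ge |R|$, $|w|\le |L|/2$, and that the longest border of $Lw$ is longer than $|w|$. Partition the set of borders of $Lw$ into groups $G_1,\dots,G_m$ so that two borders lie in the same group iff they have the same smallest period, and let $p_k$ be the common smallest period of the borders in $G_k$. Assume that $T'$ has a border longer than $R$, and let $b^\star$ be the border of $Lw$ such that $b^\star R$ is the longest border of $T'$; let $k^\star$ be the index of the group containing $b^\star$. Let $\alpha_{k^\star}$ be the exponent of the longest prefix of $T'$ having period $p_{k^\star}$, and let $r_{k^\star}=\mathit{lce}_{T'}(|T'|-|R|-p_{k^\star}+1,\ |T'|-|R|+1)$. If $b^\star$ is periodic, then $b^\star$ is the longest border of $Lw$ whose length is at most $\alpha_{k^\star}p_{k^\star}-r_{k^\star}$.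
   Context: $S[i..j]$ denotes the factor of $S$ from position $i$ to $j$ (empty if $i>j$). A border of a nonempty string $S$ is a string that is both a proper prefix and a proper suffix of $S$. If $S$ has a border $b$ then $|S|-|b|$ is a period of $S$; $\mathsf{per}(S)$ is the smallest period of $S$. The exponent of $S$ is $|S|/\mathsf{per}(S)$; $S$ is periodic if $\mathsf{per}(S)\le|S|/2$. For a string $S$ and positions $a,b$, $\mathit{lce}_S(a,b)$ is the length of the longest common prefix of $S[a..|S|]$ and $S[b..|S|]$. *)

From mathcomp Require Import all_boot all_order all_algebra.
Set Implicit Arguments. Unset Strict Implicit. Unset Printing Implicit Defensive.
Import GRing.Theory Num.Theory.

Section Strings.
Variable A : eqType.

(* b is a border of S: a proper prefix and a proper suffix of S (S nonempty
   is implied by size b < size S; the empty string counts as a border). *)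
Definition is_border (b S : seq A) : bool :=
  [&& size b < size S, prefix b S & suffix b S].

Definition has_period (S : seq A) (p : nat) : bool :=
  [&& 0 < p, p <= size S & take (size S - p) S == drop p S].

(* smallest period of S (for nonempty S; |S| is always a period).
   Junk value 1 for the empty string. *)
Definition per (S : seq A) : nat :=
  (find (has_period S) (iota 1 (size S))).+1.

Definition exponent (S : seq A) : rat := ((size S)%:R / (per S)%:R)%R.

Definition periodic (S : seq A) : bool := 2 * per S <= size S.

Definition lpp_len (S : seq A) (p : nat) : nat :=
  \max_(n < (size S).+1 | has_period (take n S) p) n.

Definition lpp (S : seq A) (p : nat) : seq A := take (lpp_len S p) S.

Fixpoint lcp (s t : seq A) : nat :=
  match s, t with
  | x :: s', y :: t' => if x == y then (lcp s' t').+1 else 0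
  | _, _ => 0
  end.

(* lce_S(a, b) with 1-based positions a, b: lcp of S[a..|S|] and S[b..|S|] *)
Definition lce (S : seq A) (a b : nat) : nat := lcp (drop a.-1 S) (drop b.-1 S).

End Strings.

From mathcomp Require Import all_boot all_order all_algebra.
From mathcomp Require Import zify.
Import GRing.Theory Num.Theory.

(* Write X = Lw, so that T' = XR, let p = per bstar and let l be the length of
   the longest prefix of T' with period p.  That prefix has the periodic string
   bstar as a prefix, so its smallest period is p as well and alpha p = l: the
   bound reads |b| + r <= l.  The lce r compares the last p letters of X,
   followed by R, with R; since every border c of X with period p ends with
   those p letters, the prefix of cR of length |c| + k (k <= |R|) has period p
   iff k <= r.  For c = bstar, a prefix of T' through bstar R, this gives
   |bstar| + r <= l, with equality when r < |R|.  So a border c longer than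
   bstar with |c| + r <= l forces r = |R|; then cR and the prefix of T' of the
   same length both have period p and share their first p letters, hence
   coincide, and cR is a border of T' longer than bstar R. *)

Section Strings.
Local Set Implicit Arguments.
Local Unset Strict Implicit.

Variable A : eqType.
Implicit Types S s t u X R c : seq A.

Lemma has_periodP x0 S p : 0 < p -> p <= size S ->
  reflect (forall k, k + p < size S -> nth x0 S k = nth x0 S (k + p))
          (has_period S p).
Proof.
move=> p0 pS; rewrite /has_period p0 pS /=.
apply: (iffP eqP) => [E k kS | Hnth].
  by have := congr1 (nth x0 ^~ k) E; rewrite /= nth_take ?nth_drop 1?addnC //; lia.
apply: (eq_from_nth (x0 := x0)) => [|k]; rewrite size_take.
  by rewrite size_drop; case: ifP; lia.
move=> kS; have kSp : k < size S - p by move: kS; case: ifP; lia.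
by rewrite nth_take // nth_drop addnC Hnth //; lia.
Qed.

Lemma has_period_take S p m :
  has_period S p -> p <= m -> m <= size S -> has_period (take m S) p.
Proof.
case/and3P=> p0 _ /eqP E pm mS; rewrite /has_period p0 size_takel // pm /=.
rewrite take_takel ?leq_subr // -[in drop p _](subnK pm) -take_drop -E.
by rewrite take_takel //; lia.
Qed.

Lemma has_periodB S p q : has_period S p -> has_period S q -> q < p ->
  p + q <= size S -> has_period S (p - q).
Proof.
move=> Hp Hq qp pqS; have [x0 _] : exists x0 : A, true.
  by case: S pqS {Hp Hq} => [|x0 ?] /=; [lia | exists x0].
have /and3P[p0 pS _] := Hp; have /and3P[q0 qS _] := Hq.
move/(has_periodP x0 p0 pS): Hp => Hp; move/(has_periodP x0 q0 qS): Hq => Hq.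
apply/(has_periodP x0); [lia | lia | move=> k kS].
have [qk | kq] := leqP q k.
  by rewrite -[k in LHS](subnK qk) -Hq 1?Hp; [congr nth | |]; lia.
by rewrite Hp 1?[in RHS]Hq; [congr nth | |]; lia.
Qed.

Lemma eq_has_period s t p : size s = size t ->
  has_period s p -> has_period t p -> take p s = take p t -> s = t.
Proof.
move=> st Hs Ht Est; have /and3P[p0 ps _] := Hs; have pt : p <= size t by rewrite -st.
have [x0 _] : exists x0 : A, true.
  by case: s ps {Hs Est st} => [|x0 ?] /=; [lia | exists x0].
move/(has_periodP x0 p0 ps): Hs => Hs; move/(has_periodP x0 p0 pt): Ht => Ht.
apply: (eq_from_nth (x0 := x0) st); elim/ltn_ind => k IH ks.
have [kp | pk] := ltnP k p; first by rewrite -(nth_take x0 kp s) -(nth_take x0 kp t) Est.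
by rewrite -(subnK pk) -Hs -1?Ht ?IH //; lia.
Qed.

Lemma per_gt0 S : 0 < per S.
Proof. by []. Qed.

Lemma per_leq S p : has_period S p -> per S <= p.
Proof.
move=> Hp; have /and3P[p0 pS _] := Hp.
rewrite /per; case: (leqP (find (has_period S) (iota 1 (size S))) p.-1) => h; first lia.
have := before_find 0 h; rewrite nth_iota; last lia.
by rewrite (_ : 1 + p.-1 = p) ?Hp //; lia.
Qed.

Lemma has_period_per S : 0 < size S -> has_period S (per S).
Proof.
move=> S0; have hs : has (has_period S) (iota 1 (size S)).
  apply/hasP; exists (size S); first by rewrite mem_iota; lia.
  by rewrite /has_period S0 leqnn subnn take0 drop_size.
have := nth_find 0 hs; have := has_find (has_period S) (iota 1 (size S)).
by rewrite hs size_iota => /esym h; rewrite nth_iota // add1n.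
Qed.

Lemma periodic_has_period u : periodic u -> has_period u (per u).
Proof.
by move=> Pu; apply: has_period_per; move: Pu (per_gt0 u); rewrite /periodic; lia.
Qed.

Lemma per_prefix_periodic u S :
  prefix u S -> periodic u -> has_period S (per u) -> per S = per u.
Proof.
move=> uS Pu HS; have uSsz := size_prefix uS; have p0 := per_gt0 u.
have up : 2 * per u <= size u := Pu.
apply/eqP; rewrite eqn_leq per_leq //= leqNgt; apply/negP => qp.
have Hq : has_period S (per S) by apply: has_period_per; lia.
have Hd : has_period S (per u - per S) by apply: has_periodB; lia.
have : has_period u (per u - per S).
  move: uS; rewrite prefixE => /eqP Eu.
  by rewrite -[u in has_period u]Eu has_period_take //; lia.
by move/per_leq; have := per_gt0 S; lia.
Qed.

Lemma lpp_len_leq_size S p : lpp_len S p <= size S.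
Proof. by apply/bigmax_leqP => i _; rewrite -ltnS. Qed.

Lemma leq_lpp_len S p m :
  m <= size S -> has_period (take m S) p -> m <= lpp_len S p.
Proof. by rewrite -ltnS => mS Hm; apply: (leq_bigmax_cond (Ordinal mS)). Qed.

Lemma has_period_lpp S p m :
  m <= size S -> has_period (take m S) p -> has_period (lpp S p) p.
Proof.
rewrite -ltnS => mS Hm; rewrite /lpp /lpp_len (bigmax_eq_arg (Ordinal mS)) //.
by case: arg_maxnP.
Qed.

Lemma exponent_lpp S u : prefix u S -> periodic u ->
  (exponent (lpp S (per u)) * (per u)%:R = (lpp_len S (per u))%:R :> rat)%R.
Proof.
move=> uS Pu; have Eu : take (size u) S = u by apply/eqP; rewrite -prefixE.
have Hu : has_period (take (size u) S) (per u) by rewrite Eu periodic_has_period.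
have ul : size u <= lpp_len S (per u) by apply: leq_lpp_len; rewrite ?size_prefix.
have u_lpp : prefix u (lpp S (per u)) by rewrite prefixE /lpp take_takel // Eu.
have Hl := has_period_lpp (size_prefix uS) Hu.
rewrite /exponent (per_prefix_periodic u_lpp Pu Hl) /lpp size_takel ?lpp_len_leq_size //.
by rewrite divfK // pnatr_eq0 -lt0n per_gt0.
Qed.

Lemma leq_lcp s t k : (k <= lcp s t) = (k <= size s) && (take k s == take k t).
Proof.
elim: s t k => [|x s IH] [|y t] [|k] //=; rewrite ?andbF // eqseq_cons.
by case: eqP => /= _; rewrite ?andbF // !ltnS IH.
Qed.

Lemma lcp_leq_size s t : lcp s t <= size t.
Proof. by elim: s t => [|x s IH] [|y t] //=; case: eqP => // _; apply: IH. Qed.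

Lemma has_period_takeD u m k p : p <= m -> m + k <= size u ->
  has_period (take m u) p ->
  has_period (take (m + k) u) p = (k <= lcp (drop (m - p) u) (drop m u)).
Proof.
move=> pm mku /and3P[p0 _ /eqP Hm]; have mu : m <= size u by lia.
have Hm' : take (m - p) u = take (m - p) (drop p u).
  by rewrite take_drop subnK // -Hm size_takel // take_takel ?leq_subr.
rewrite /has_period p0 size_takel // leq_lcp size_drop take_takel ?leq_subr //.
have -> : drop p (take (m + k) u) = take (m + k - p) (drop p u).
  by rewrite take_drop subnK //; lia.
have -> : p <= m + k by lia.
have -> : k <= size u - (m - p) by lia.
by rewrite -addnBAC // !takeD eqseq_cat ?Hm' // eqxx drop_drop subnK.
Qed.

Lemma has_period_take_suffix_cat X R c p k : suffix c X -> has_period c p ->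
  k <= size R ->
  has_period (take (size c + k) (c ++ R)) p =
    (k <= lcp (drop (size X - p) (X ++ R)) R).
Proof.
move=> /suffixP[s ->] Hc kR; have /and3P[_ pc _] := Hc.
rewrite has_period_takeD ?take_size_cat ?size_cat ?leq_add2l //.
rewrite (drop_size_cat R (erefl _)) -catA -addnBA // addnC -drop_drop.
by rewrite (drop_size_cat _ (erefl _)).
Qed.

Section LongestBorderExtension.
Variables X R b : seq A.
Hypothesis b_border : is_border b X.
Hypothesis bR_border : is_border (b ++ R) (X ++ R).
Hypothesis bR_longest : forall B, is_border B (X ++ R) -> size B <= size (b ++ R).
Hypothesis b_periodic : periodic b.

Local Notation p := (per b).
Local Notation l := (lpp_len (X ++ R) p).
Local Notation r := (lcp (drop (size X - p) (X ++ R)) R).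

Let take_bR m : m <= size b + size R -> take m (X ++ R) = take m (b ++ R).
Proof.
by case/and3P: bR_border => _ /prefixP[s ->] _ mbR; rewrite takel_cat ?size_cat.
Qed.

Let take_b : take (size b) (X ++ R) = b.
Proof. by rewrite take_bR ?leq_addr // take_size_cat. Qed.

Let b_period : has_period b p.
Proof. exact: periodic_has_period. Qed.

Let p_le_b : p <= size b.
Proof. by case/and3P: b_period. Qed.

Lemma has_period_take_lpp m : p <= m <= l -> has_period (take m (X ++ R)) p.
Proof.
case/andP=> pm ml; have bXR : size b <= size (X ++ R).
  by case/and3P: b_border => /ltnW bX _ _; rewrite size_cat; lia.
have Hl : has_period (lpp (X ++ R) p) p.
  by apply: (has_period_lpp bXR); rewrite take_b.
rewrite -(take_takel _ ml); apply: has_period_take Hl pm _.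
by rewrite size_takel ?lpp_len_leq_size.
Qed.

Lemma border_lce_leq_lpp_len : size b + r <= l.
Proof.
have rR := lcp_leq_size (drop (size X - p) (X ++ R)) R.
case/and3P: b_border => bX _ b_suffix.
apply: leq_lpp_len; first by rewrite size_cat; lia.
by rewrite take_bR ?leq_add2l // (has_period_take_suffix_cat b_suffix).
Qed.

Lemma border_leq_of_lce_bound c : is_border c X -> size c + r <= l -> size c <= size b.
Proof.
move=> c_border crl; rewrite leqNgt; apply/negP => bc.
case/and3P: (c_border) => cX c_prefix c_suffix.
case/and3P: (b_border) => bX _ b_suffix.
have rR := lcp_leq_size (drop (size X - p) (X ++ R)) R.
have [r_lt_R | r_eq_R] := ltnP r (size R).
  have : has_period (take (size b + r.+1) (X ++ R)) p by apply: has_period_take_lpp; lia.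
  by rewrite take_bR ?leq_add2l // (has_period_take_suffix_cat b_suffix) // ltnn.
have take_c : take (size c) (X ++ R) = c.
  by apply/eqP; rewrite takel_cat -?prefixE // ltnW.
have c_period : has_period c p by rewrite -take_c has_period_take_lpp //; lia.
have cR : take (size c + size R) (X ++ R) = c ++ R.
  apply: eq_has_period.
  - by rewrite size_takel size_cat // leq_add2r ltnW.
  - by apply: has_period_take_lpp; lia.
  - by rewrite -[c ++ R]take_size size_cat (has_period_take_suffix_cat c_suffix) //; lia.
  have pc : p <= size c by lia.
  have take_p : take p (X ++ R) = take p c by rewrite -take_c take_takel.
  by rewrite take_takel ?take_p ?takel_cat // (leq_trans pc (leq_addr _ _)).
have : is_border (c ++ R) (X ++ R).
  by rewrite /is_border !size_cat ltn_add2r cX prefixE size_cat cR eqxx suffix_catl ?eqxx.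
by move/bR_longest; rewrite !size_cat leq_add2r leqNgt bc.
Qed.

End LongestBorderExtension.

End Strings.

Theorem corollary11 (A : eqType) (T w L R T' bstar : seq A) (i j : nat) :
  1 <= j <= size T ->
  1 <= i <= j.+1 ->
  L = take i.-1 T ->            (* L = T[1..i-1] *)
  R = drop j T ->               (* R = T[j+1..|T|] *)
  T' = L ++ w ++ R ->
  size R <= size L ->
  2 * size w <= size L ->       (* |w| <= |L|/2 *)
  (exists b, is_border b (L ++ w) && (size w < size b)) ->
  (exists B, is_border B T' && (size R < size B)) ->
  is_border bstar (L ++ w) ->
  is_border (bstar ++ R) T' ->
  (forall B, is_border B T' -> size B <= size (bstar ++ R)) ->
  periodic bstar ->
  let p := per bstar in
  let alpha := exponent (lpp T' p) in
  let r := lce T' (size T' - size R - p + 1) (size T' - size R + 1) in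
  [/\ ((size bstar)%:R <= alpha * p%:R - r%:R :> rat)%R
    & forall b, is_border b (L ++ w) ->
        ((size b)%:R <= alpha * p%:R - r%:R :> rat)%R ->
        size b <= size bstar].
Proof.
move=> _ _ _ _ -> _ _ _ _ b_border bR_border bR_longest b_periodic.
rewrite catA in bR_border bR_longest *; set X := L ++ w in b_border bR_border bR_longest *.
move=> p alpha r.
have r_lcp : r = lcp (drop (size X - p) (X ++ R)) R.
  by rewrite /r /lce size_cat addnK !addn1 /= (drop_size_cat _ (erefl _)).
have bound_lpp n : ((n%:R <= alpha * p%:R - r%:R :> rat)%R = (n + r <= lpp_len (X ++ R) p)).
  have /and3P[_ b_prefix _] := b_border.
  by rewrite exponent_lpp ?(prefix_catl _ b_prefix) // lerBrDr -natrD ler_nat.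
split=> [|c c_border]; rewrite bound_lpp r_lcp.
  exact: border_lce_leq_lpp_len.
exact: border_leq_of_lce_bound.
Qed.
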